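(* Let $\mathcal{C}$ be a finite set of latent classes with cardinality $N_{\mathcal{C}}$, let $\rho$ be a probability distribution on $\mathcal{C}$ with $\rho(c)>0$ for all $c$, and for each $c\in\mathcal{C}$ let $\mathcal{D}_c$ be a distribution on a feature space $\mathcal{X}$. Let $N$ be a number of negative samples satisfying $N=\Omega(N_{\mathcal{C}}\log N_{\mathcal{C}})$. Then for any encoder $f:\mathcal{X}\to\mathbb{R}^d$, $$L_{\mathrm{sup}}(f,\mathcal{C})\le L^\mu_{\mathrm{sup}}(f,\mathcal{C})\le \frac{1}{p^\rho_{cc}(N)}L^N_{\mathrm{un}}(f),$$ where $p^\rho_{cc}(N)$ is the probability that $N$ independent draws from $\rho$ include every element of $\mathcal{C}$ at least once (i.e. all coupons are collected after $N$ draws in an $N_{\mathcal{C}}$-coupon collector problem with draws from $\rho$).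
   Context: Positive pairs are drawn from $\mathcal{D}_{\mathrm{sim}}(x,x^+)=\sum_{c\in\mathcal{C}}\rho(c)\mathcal{D}_c(x)\mathcal{D}_c(x^+)$ and negatives from $\mathcal{D}_{\mathrm{neg}}(x^-)=\sum_{c\in\mathcal{C}}\rho(c)\mathcal{D}_c(x^-)$. The unsupervised loss with $N$ negatives is $$L^N_{\mathrm{un}}(f)=\mathbb{E}_{(x,x^+)\sim\mathcal{D}_{\mathrm{sim}},\,X^-\sim\mathcal{D}_{\mathrm{neg}}^{\otimes N}}\Big[-\log\frac{\exp(f(x)^Tf(x^+))}{\exp(f(x)^Tf(x^+))+\sum_{x^-\in X^-}\exp(f(x)^Tf(x^-))}\Big],$$ where $X^-$ is a tuple of $N$ i.i.d. draws from $\mathcal{D}_{\mathrm{neg}}$. With $\mathcal{D}_{\mathcal{C}}(x,c)=\rho(c)\mathcal{D}_c(x)$, the supervised loss is $$L_{\mathrm{sup}}(f,\mathcal{C})=\inf_{W\in\mathbb{R}^{N_{\mathcal{C}}\times d}}\mathbb{E}_{(x,c)\sim\mathcal{D}_{\mathcal{C}}}\Big[-\log\frac{\exp((Wf(x))_c)}{\sum_{c'\in\mathcal{C}}\exp((Wf(x))_{c'})}\Big],$$ and $L^\mu_{\mathrm{sup}}(f,\mathcal{C})$ is the same expectation evaluated at the mean classifier $W^\mu$ whose row indexed by $c$ is $\mathbb{E}_{x\sim\mathcal{D}_c}[f(x)]$. *)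

From HB Require Import structures.
From mathcomp Require Import all_boot all_order all_algebra.
From mathcomp Require Import all_classical all_reals all_analysis.
Set Implicit Arguments. Unset Strict Implicit. Unset Printing Implicit Defensive.
Import Order.TTheory GRing.Theory Num.Theory.
Import numFieldNormedType.Exports.
Local Open Scope classical_set_scope.
Local Open Scope ring_scope.

Section Contrastive.
Variables (R : realType) (d : measure_display) (X : measurableType d) (C : finType).
Variables (rho : C -> R) (D : C -> probability X R) (n : nat).
Implicit Types (f : X -> 'rV[R]_n).

Definition dotr (u v : 'rV[R]_n) : R := \sum_(j < n) u 0 j * v 0 j.

(* cross-entropy (softmax) loss of the scores s : 'cV_(#|C|) at label c;
   row c of W is the row indexed by enum_rank c *)
Definition softmax_loss (s : 'cV[R]_(#|C|)) (c : C) : R :=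
  - ln (expR (s (enum_rank c) 0) / \sum_(c' : C) expR (s (enum_rank c') 0)).

Definition sup_loss_W f (W : 'M[R]_(#|C|, n)) : \bar R :=
  \sum_(c : C) (rho c)%:E *
     \int[D c]_x (softmax_loss (W *m (f x)^T) c)%:E.

Definition L_sup f : \bar R := ereal_inf (range (sup_loss_W f)).

Definition W_mu f : 'M[R]_(#|C|, n) :=
  \matrix_(i < #|C|, j < n) Rintegral (D (enum_val i)) setT (fun x => f x 0 j).

Definition L_sup_mu f : \bar R := sup_loss_W f (W_mu f).

(* Expectation over X^- ~ D_neg^{(x) N}, D_neg = sum_c rho(c) D_c,
   written as the iterated integral (the tuple is built as a list). *)
Fixpoint neg_expect (N : nat) (g : seq X -> \bar R) : \bar R :=
  match N with
  | 0 => g [::]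
  | N'.+1 => \sum_(c : C) (rho c)%:E *
              \int[D c]_y neg_expect N' (fun s => g (y :: s))
  end.

Definition un_loss_pt f (x xp : X) (s : seq X) : R :=
  - ln (expR (dotr (f x) (f xp)) /
        (expR (dotr (f x) (f xp)) + \sum_(y <- s) expR (dotr (f x) (f y)))).

Definition L_un f (N : nat) : \bar R :=
  \sum_(c : C) (rho c)%:E *
    \int[D c]_x \int[D c]_xp
       neg_expect N (fun s => (un_loss_pt f x xp s)%:E).

Definition pcc (N : nat) : R :=
  \sum_(t : {ffun 'I_N -> C} | [forall c, exists i, t i == c])
     \prod_(i < N) rho (t i).

End Contrastive.

From HB Require Import structures.
From mathcomp Require Import all_boot all_order all_algebra.
From mathcomp Require Import all_classical all_reals all_analysis.
From mathcomp Require Import ring.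
Import Order.TTheory GRing.Theory Num.Theory.
Local Open Scope classical_set_scope.
Local Open Scope ring_scope.
Set Implicit Arguments. Unset Strict Implicit. Unset Printing Implicit Defensive.

(* Fix a class c and an anchor x, and let u y = f(x)^T f(y) and
   v k = E_{D_k}[u], so that v is the score vector of the mean classifier
   and its softmax loss at c is logsumexp v - v c.  Condition on the classes
   of the N negatives.  If every class k <> c occurs, keep only the first
   negative y_k of each such class: this can only decrease the contrastive
   loss, which is therefore at least logsumexp w - u(x+), where w c = u(x+)
   and w k = u(y_k); by convexity of logsumexp this is at least its tangent
   at v.  The tangent is affine in the w k, whose expectations are the v k,
   so its expectation is logsumexp v - v c.  Otherwise the loss is merely
   nonnegative.  As the first event has probability at least p_cc(N), which
   is positive since N >= #|C|, this gives p_cc(N) L^mu_sup <= L^N_un. *)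

Section integral_lower_bounds.
Context {R : realType} {d : measure_display} {X : measurableType d}.
Variable mu : measure X R.

(* Unlike [ge0_le_integral], no measurability is needed: the integral of a
   nonnegative function is a supremum over the simple functions below it. *)
Lemma ge0_le_integralT (f g : X -> \bar R) :
  (forall x, 0 <= f x)%E -> (forall x, f x <= g x)%E ->
  (\int[mu]_x f x <= \int[mu]_x g x)%E.
Proof.
move=> f0 fg; have g0 x : (0 <= g x)%E by exact: le_trans (f0 x) (fg x).
rewrite !ge0_integralTE //; apply: ereal_sup_le => _ [h hf <-].
by exists h => // x; exact: le_trans (hf x) (fg x).
Qed.

Lemma integrable_le_integralT (h : X -> R) (g : X -> \bar R) :
  mu.-integrable setT (fun x => (h x)%:E) ->
  (forall x, 0 <= g x)%E -> (forall x, (h x)%:E <= g x)%E ->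
  (\int[mu]_x (h x)%:E <= \int[mu]_x g x)%E.
Proof.
move=> hint g0 hg; rewrite integralE.
apply: (@le_trans _ _ (\int[mu]_x ((fun x => (h x)%:E)^\+ x))%E).
  rewrite leeBlDr; last exact: integrable_neg_fin_num.
  by apply: leeDl; apply: integral_ge0 => x _; exact: funeneg_ge0.
apply: ge0_le_integralT => x; first exact: funepos_ge0.
by rewrite funeposE ge_max hg g0.
Qed.

End integral_lower_bounds.

Section coupon_collector.
Context {R : realType} {C : finType} (rho : C -> R).

Definition covers N (B : {set C}) (t : {ffun 'I_N -> C}) : bool :=
  [forall k in B, exists i, t i == k].

Definition pcover N (B : {set C}) : R :=
  \sum_(t : {ffun 'I_N -> C} | covers B t) \prod_(i < N) rho (t i).

Definition ffcons N (k : C) (t : {ffun 'I_N -> C}) : {ffun 'I_N.+1 -> C} :=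
  [ffun i => if unlift ord0 i is Some j then t j else k].

Lemma ffcons0 N k (t : {ffun 'I_N -> C}) : ffcons k t ord0 = k.
Proof. by rewrite ffunE unlift_none. Qed.

Lemma ffconsS N k (t : {ffun 'I_N -> C}) j : ffcons k t (lift ord0 j) = t j.
Proof. by rewrite ffunE liftK. Qed.

Lemma bij_ffcons N :
  bijective (fun p : C * {ffun 'I_N -> C} => ffcons p.1 p.2).
Proof.
exists (fun t : {ffun 'I_N.+1 -> C} => (t ord0, [ffun j => t (lift ord0 j)])).
  case=> k t /=; rewrite ffcons0; congr pair.
  by apply/ffunP => j; rewrite ffunE ffconsS.
move=> t; apply/ffunP => i; rewrite ffunE /=.
by case: (unliftP ord0 i) => [j ->|->]; rewrite ?ffunE.
Qed.

Lemma covers_ffcons N B k (t : {ffun 'I_N -> C}) :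
  covers B (ffcons k t) = covers (B :\ k) t.
Proof.
apply/forall_inP/forall_inP => cov j.
- case/setD1P => jk /cov /existsP[i].
  case: (unliftP ord0 i) => [i' ->|->].
    by rewrite ffconsS => e; apply/existsP; exists i'.
  by rewrite ffcons0 => /eqP kj; rewrite kj eqxx in jk.
- case: (eqVneq j k) => [-> _|jk jB].
    by apply/existsP; exists ord0; rewrite ffcons0.
  have /cov /existsP[i e] : j \in B :\ k by rewrite in_setD1 jk.
  by apply/existsP; exists (lift ord0 i); rewrite ffconsS.
Qed.

Lemma pcover0 B : pcover 0 B = (B == finset.set0)%:R.
Proof.
rewrite /pcover; case: eqP => [->|/eqP/set0Pn[k kB]].
  rewrite (eq_bigl xpredT) => [|t]; last by apply/forall_inP => k; rewrite inE.
  under eq_bigr do rewrite big_ord0.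
  by rewrite sumr_const card_ffun card_ord expn0.
by rewrite big_pred0 // => t; apply/forall_inP => /(_ k kB) /existsP[[]].
Qed.

Lemma pcoverS N B : pcover N.+1 B = \sum_k rho k * pcover N (B :\ k).
Proof.
rewrite /pcover (reindex _ (onW_bij _ (@bij_ffcons N))) /=.
under [RHS]eq_bigr do rewrite mulr_sumr.
rewrite pair_big_dep /=; apply: eq_big => [[k t]|[k t] _] /=.
  by rewrite covers_ffcons.
rewrite big_ord_recl ffcons0; congr (_ * _).
by apply: eq_bigr => i _; rewrite ffconsS.
Qed.

Lemma pcover_setT_gt0 N :
  (forall k, 0 < rho k) -> (0 < #|C| <= N)%N -> 0 < pcover N [set: C].
Proof.
move=> rho_gt0 /andP[C0 CN]; have c0 : C := enum_val (Ordinal C0).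
pose t := [ffun i : 'I_N => nth c0 (enum C) i].
have covt : covers [set: C] t.
  apply/forall_inP => k _.
  have kN : (index k (enum C) < N)%N.
    by rewrite (leq_trans _ CN) // cardE index_mem mem_enum.
  by apply/existsP; exists (Ordinal kN); rewrite ffunE nth_index ?mem_enum.
rewrite /pcover (bigD1 t) //=; apply: ltr_pwDl; first exact: prodr_gt0.
by apply: sumr_ge0 => s _; apply: prodr_ge0 => i _; exact/ltW.
Qed.

Lemma pcc_pcover N : pcc rho N = pcover N [set: C].
Proof. by apply: eq_bigl => t; apply: eq_forallb => k; rewrite inE. Qed.

Hypothesis rho_ge0 : forall k, 0 <= rho k.

Lemma le_pcover N (B B' : {set C}) : B \subset B' -> pcover N B' <= pcover N B.
Proof.
move=> sBB'; rewrite /pcover [leRHS]big_mkcond [leLHS]big_mkcond /=.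
apply: ler_sum => t _; case: ifP => [covB'|_].
  suff -> : covers B t by [].
  by apply/forall_inP => k /(fintype.subsetP sBB'); move/forall_inP: covB'; apply.
by case: ifP => // _; apply: prodr_ge0.
Qed.

End coupon_collector.

Section logsumexp.
Context {R : realType} {C : finType}.
Implicit Types v w : C -> R.

Definition logsumexp w : R := ln (\sum_k expR (w k)).

Definition softmax w (k : C) : R := expR (w k) / \sum_j expR (w j).

Lemma sum_expR_gt0 (c : C) w : 0 < \sum_k expR (w k).
Proof.
rewrite (bigD1 c) //= ltr_pwDl ?expR_gt0 //.
by apply: sumr_ge0 => *; exact/ltW/expR_gt0.
Qed.

Lemma softmax_ge0 v k : 0 <= softmax v k.
Proof. by rewrite divr_ge0 // ?sumr_ge0 // => *; exact/ltW/expR_gt0. Qed.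

Lemma sum_softmax (c : C) v : \sum_k softmax v k = 1.
Proof. by rewrite -mulr_suml mulfV // gt_eqF // (sum_expR_gt0 c). Qed.

Lemma logsumexp_tangent v w :
  logsumexp v + \sum_k softmax v k * (w k - v k) <= logsumexp w.
Proof.
case: (pickP (@predT C)) => [c _|C0]; last by rewrite /logsumexp !big_pred0 ?addr0.
set L := logsumexp w - logsumexp v.
suff : \sum_k softmax v k * (w k - v k - L) <= 0.
  rewrite (eq_bigr (fun k => softmax v k * (w k - v k) - softmax v k * L));
    last by move=> k _; ring.
  by rewrite sumrB -mulr_suml sum_softmax // mul1r subr_le0 /L lerBrDl.
have eL : expR L = (\sum_k expR (w k)) / \sum_k expR (v k).
  by rewrite /L expRD expRN !lnK ?posrE ?(sum_expR_gt0 c).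
have softmaxE k : softmax v k * expR (w k - v k - L) = softmax w k.
  rewrite !expRD !expRN eL /softmax.
  have := expR_gt0 (v k); have := sum_expR_gt0 c v; have := sum_expR_gt0 c w.
  by move=> /gt_eqF Sw /gt_eqF Sv /gt_eqF ev; field; rewrite Sw Sv ev.
apply: (@le_trans _ _ (\sum_k (softmax v k * expR (w k - v k - L) - softmax v k))).
  apply: ler_sum => k _; rewrite -{3}(mulr1 (softmax v k)) -mulrBr.
  by rewrite ler_wpM2l ?softmax_ge0 // lerBrDr addrC expR_ge1Dx.
by rewrite sumrB (eq_bigr _ (fun k _ => softmaxE k)) !(sum_softmax c) subrr.
Qed.

End logsumexp.

Lemma ln_expR_div (R : realType) (a b : R) : 0 < b -> ln (expR a / b) = a - ln b.
Proof.
by move=> b0; rewrite lnM ?posrE ?expR_gt0 ?invr_gt0 // lnV ?posrE // expRK.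
Qed.

Lemma softmax_lossE (R : realType) (C : finType) (s : 'cV[R]_#|C|) (c : C) :
  softmax_loss s c = logsumexp (fun k => s (enum_rank k) 0) - s (enum_rank c) 0.
Proof. by rewrite /softmax_loss ln_expR_div ?(sum_expR_gt0 c) // opprB. Qed.

Lemma softmax_loss_ge0 (R : realType) (C : finType) (s : 'cV[R]_#|C|) (c : C) :
  0 <= softmax_loss s c.
Proof.
rewrite softmax_lossE subr_ge0 -{1}(expRK (s (enum_rank c) 0)).
rewrite ler_ln ?posrE ?expR_gt0 ?(sum_expR_gt0 c) // (bigD1 c) //= lerDl.
by apply: sumr_ge0 => *; exact/ltW/expR_gt0.
Qed.

Section contrast_loss.
Context {R : realType}.

Definition contrast_loss (a S : R) : R := ln (expR a + S) - a.

Lemma contrast_lossE a S : 0 <= S ->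
  - ln (expR a / (expR a + S)) = contrast_loss a S.
Proof. by move=> S0; rewrite ln_expR_div ?opprB // ltr_pwDl ?expR_gt0. Qed.

Lemma contrast_loss_ge0 a S : 0 <= S -> 0 <= contrast_loss a S.
Proof.
move=> S0; rewrite subr_ge0 -{1}(expRK a) ler_ln ?posrE ?lerDl ?expR_gt0 //.
by rewrite ltr_pwDl ?expR_gt0.
Qed.

Lemma logsumexp_le_contrast_loss (C : finType) (c : C) (w : C -> R) a S :
  \sum_k expR (w k) <= expR a + S -> logsumexp w - a <= contrast_loss a S.
Proof.
move=> le_sum; rewrite lerD2r ler_ln ?posrE ?(sum_expR_gt0 c) //.
exact: lt_le_trans (sum_expR_gt0 c w) le_sum.
Qed.

End contrast_loss.

Section negative_sampling.
Context {R : realType} {d : measure_display} {X : measurableType d} {C : finType}.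
Variables (rho : C -> R) (D : C -> probability X R).
Hypothesis rho_ge0 : forall k, 0 <= rho k.
Lemma neg_expect_ge0 N (g : seq X -> \bar R) :
  (forall s, 0 <= g s)%E -> (0 <= neg_expect rho D N g)%E.
Proof.
elim: N g => [|N IH] g g0 /=; first exact: g0.
apply: sume_ge0 => k _; apply: mule_ge0; first by rewrite lee_fin.
by apply: integral_ge0 => y _; apply: IH.
Qed.

Variables (u : X -> R) (v : C -> R).
Hypothesis u_int : forall k, (D k).-integrable setT (fun y => (u y)%:E).
Hypothesis u_mean : forall k, (\int[D k]_y (u y)%:E = (v k)%:E)%E.

Lemma integrable_affine k al be :
  (D k).-integrable setT (fun y => (al + be * u y)%:E).
Proof.
apply: (@eq_integrable _ _ _ _ _ measurableT
  (fun y => al%:E + be%:E * (u y)%:E)%E) => [y _|]; first by rewrite EFinD EFinM.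
apply: (integrableD measurableT); first exact: finite_measure_integrable_cst.
exact: (integrableZl measurableT _ (u_int k)).
Qed.

Lemma integral_affine k al be :
  (\int[D k]_y (al + be * u y)%:E = (al + be * v k)%:E)%E.
Proof.
under eq_integral do rewrite EFinD EFinM.
rewrite (integralD measurableT); last 2 first.
- exact: finite_measure_integrable_cst.
- exact: (integrableZl measurableT _ (u_int k)).
rewrite integral_cst // [X in (_ * X + _)%E]probability_setT mule1.
rewrite integralZl //; last exact: u_int.
by rewrite [X in (_ + _ * X)%E](_ : _ = (v k)%:E); last exact: u_mean.
Qed.

Lemma le_integral_affine k al be (g : X -> \bar R) :
  (forall y, 0 <= g y)%E -> (forall y, (al + be * u y)%:E <= g y)%E ->
  ((al + be * v k)%:E <= \int[D k]_y g y)%E.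
Proof.
move=> g0 le_g; rewrite -integral_affine.
by apply: integrable_le_integralT => //; exact: integrable_affine.
Qed.

Lemma neg_expect_contrast_loss_ge0 N a S : 0 <= S ->
  (0 <= neg_expect rho D N
          (fun s => (contrast_loss a (S + \sum_(y <- s) expR (u y)))%:E))%E.
Proof.
move=> S0; apply: neg_expect_ge0 => // s; rewrite lee_fin contrast_loss_ge0 //.
by rewrite addr_ge0 // sumr_ge0 // => y _; rewrite ltW ?expR_gt0.
Qed.

(* Invariant of the induction on the number N of negatives still to be drawn:
   B is the set of classes without a witness yet (the class c is witnessed
   by the positive, of score a), w k is the score of the witness of a class
   k outside B, and S is the sum of the exponentiated scores of the
   negatives drawn so far. *)
Lemma neg_expect_contrast_loss_ge (c : C) N (B : {set C}) (w : C -> R) (a S : R) :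
  c \notin B -> 0 <= S -> \sum_(k in ~: B) expR (w k) <= expR a + S ->
  ((pcover rho N B *
      (logsumexp v - a + \sum_(k in ~: B) softmax v k * (w k - v k)))%:E
    <= neg_expect rho D N
         (fun s => (contrast_loss a (S + \sum_(y <- s) expR (u y)))%:E))%E.
Proof.
elim: N B w S => [|N IH] B w S cB S0 le_sum /=.
  rewrite pcover0 big_nil addr0 lee_fin.
  case: eqP => [B0|_]; last by rewrite mul0r contrast_loss_ge0.
  have sum_CB (F : C -> R) : \sum_(k in ~: B) F k = \sum_k F k.
    by apply: eq_bigl => k; rewrite B0 !inE.
  rewrite mul1r sum_CB; rewrite sum_CB in le_sum.
  apply: le_trans (logsumexp_le_contrast_loss c le_sum).
  by rewrite addrAC lerD2r logsumexp_tangent.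
rewrite pcoverS mulr_suml -sumEFin; apply: lee_sum => k _.
rewrite -mulrA EFinM; apply: lee_wpmul2l; first by rewrite lee_fin.
set M := logsumexp v - a + _.
have S'_ge0 y : 0 <= S + expR (u y) by rewrite addr_ge0 // ltW ?expR_gt0.
have loss_cons y :
    (fun s => (contrast_loss a (S + \sum_(z <- y :: s) expR (u z)))%:E) =
    (fun s => (contrast_loss a (S + expR (u y) + \sum_(z <- s) expR (u z)))%:E).
  by apply/funext => s; rewrite big_cons addrA.
(* A negative of a witnessed class k only increases S; one of a class k in B
   becomes the witness of k and contributes softmax v k * (u y - v k). *)
case: (boolP (k \in B)) => kB; last first.
  have -> : B :\ k = B by apply/finset.setDidPl; rewrite disjoint_sym disjoints1.
  rewrite (_ : _ * M = pcover rho N B * M + 0 * v k); last by rewrite mul0r addr0.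
  apply: le_integral_affine => [y|y]; rewrite loss_cons.
    exact: neg_expect_contrast_loss_ge0.
  rewrite mul0r addr0; apply: IH => //.
  by rewrite (le_trans le_sum) // addrA lerDl ltW ?expR_gt0.
pose w' y j := if j == k then u y else w j.
have w'E y (F : C -> R -> R) :
    \sum_(j in ~: B) F j (w' y j) = \sum_(j in ~: B) F j (w j).
  by apply: eq_bigr => j; rewrite inE /w' => jB; case: eqP jB => // ->; rewrite kB.
have kCB : k \notin ~: B by rewrite inE kB.
rewrite (_ : _ * M = pcover rho N (B :\ k) * (M - softmax v k * v k)
                    + pcover rho N (B :\ k) * softmax v k * v k); last by ring.
apply: le_integral_affine => [y|y]; rewrite loss_cons.
  exact: neg_expect_contrast_loss_ge0.
have := IH (B :\ k) (w' y) (S + expR (u y)).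
rewrite finset.setCD finset.setUC !big_setU1 //= (w'E y (fun _ => expR)).
rewrite (w'E y (fun j x => softmax v j * (x - v j))) /w' eqxx.
rewrite in_setD1 (negbTE cB) andbF.
move=> /(_ isT (S'_ge0 y)) IHy; apply: le_trans (IHy _).
  by rewrite lee_fin le_eqVlt; apply: predU1l; rewrite /M; ring.
by rewrite addrA [leRHS]addrC lerD2l.
Qed.

Lemma integral_neg_expect_contrast_loss_ge (c : C) N :
  ((pcover rho N (~: [set c]) * (logsumexp v - v c))%:E
    <= \int[D c]_xp neg_expect rho D N
         (fun s => (contrast_loss (u xp) (\sum_(y <- s) expR (u y)))%:E))%E.
Proof.
set P := pcover rho N _.
rewrite (_ : _ * _ = P * (logsumexp v - softmax v c * v c)
                    + P * (softmax v c - 1) * v c); last by ring.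
have loss0 a : (fun s => (contrast_loss a (\sum_(y <- s) expR (u y)))%:E) =
                (fun s => (contrast_loss a (0 + \sum_(y <- s) expR (u y)))%:E).
  by apply/funext => s; rewrite add0r.
apply: le_integral_affine => xp; rewrite loss0.
  exact: neg_expect_contrast_loss_ge0.
have := @neg_expect_contrast_loss_ge c N (~: [set c]) (fun=> u xp) (u xp) 0.
rewrite finset.setCK !big_set1 addr0 => /(_ _ (lexx 0) (lexx _)) lb.
apply: le_trans (lb _); last by rewrite !inE negbK.
by rewrite lee_fin le_eqVlt; apply: predU1l; rewrite /P; ring.
Qed.

End negative_sampling.

Section mean_classifier.
Context {R : realType} {d : measure_display} {X : measurableType d} {C : finType}.
Variables (D : C -> probability X R) (n : nat) (f : X -> 'rV[R]_n).

Lemma mulmx_trE (W : 'M[R]_(#|C|, n)) (r : 'rV[R]_n) i :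
  (W *m r^T) i 0 = \sum_(j < n) W i j * r 0 j.
Proof. by rewrite mxE; apply: eq_bigr => j _; rewrite mxE. Qed.

Lemma un_loss_ptE x xp s :
  un_loss_pt f x xp s =
  contrast_loss (dotr (f x) (f xp)) (\sum_(y <- s) expR (dotr (f x) (f y))).
Proof.
by rewrite /un_loss_pt contrast_lossE // sumr_ge0 // => y _; rewrite ltW ?expR_gt0.
Qed.

Hypothesis f_meas : forall j, measurable_fun setT (fun x => f x 0 j).

Lemma measurable_softmax_loss (W : 'M[R]_(#|C|, n)) c :
  measurable_fun setT (fun x => softmax_loss (W *m (f x)^T) c).
Proof.
have mW i : measurable_fun setT (fun x => (W *m (f x)^T) i 0).
  under eq_fun do rewrite mulmx_trE.
  by apply: measurable_sum => j; apply: measurable_realfun.measurable_funM.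
under eq_fun do rewrite softmax_lossE.
apply: measurable_realfun.measurable_funB => //.
apply: measurableT_comp; first exact: measurable_realfun.measurable_ln.
by apply: measurable_sum => k; apply: measurableT_comp.
Qed.

Hypothesis f_int : forall k j, (D k).-integrable setT (fun x => (f x 0 j)%:E).

Lemma dotrE (r s : 'rV[R]_n) :
  (dotr r s)%:E = (\sum_(j < n) (r 0 j)%:E * (s 0 j)%:E)%E.
Proof. by rewrite /dotr -sumEFin; apply: eq_bigr => j _; rewrite EFinM. Qed.

Lemma integrable_dotr k (r : 'rV[R]_n) :
  (D k).-integrable setT (fun y => (dotr r (f y))%:E).
Proof.
apply: (@eq_integrable _ _ _ _ _ measurableT
  (fun y => \sum_(j < n) (r 0 j)%:E * (f y 0 j)%:E)%E) => [y _|].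
  by rewrite dotrE.
by apply: integrable_sum => // j _; exact: (integrableZl measurableT _ (f_int k j)).
Qed.

Lemma integral_dotr k (r : 'rV[R]_n) :
  (\int[D k]_y (dotr r (f y))%:E = ((W_mu D f *m r^T) (enum_rank k) 0)%:E)%E.
Proof.
under eq_integral do rewrite dotrE.
rewrite integral_sum //; last first.
  by move=> j; exact: (integrableZl measurableT _ (f_int k j)).
rewrite mulmx_trE -sumEFin; apply: eq_bigr => j _.
rewrite integralZl //; last exact: f_int.
rewrite /W_mu mxE enum_rankK EFinM /Rintegral fineK; first exact: muleC.
exact: integrable_fin_num (f_int k j).
Qed.

Lemma softmax_loss_W_mu_le (rho : C -> R) N c x : (forall k, 0 <= rho k) ->
  ((pcover rho N (~: [set c]) * softmax_loss (W_mu D f *m (f x)^T) c)%:E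
    <= \int[D c]_xp neg_expect rho D N (fun s => (un_loss_pt f x xp s)%:E))%E.
Proof.
move=> rho_ge0; under eq_integral do under eq_fun do rewrite un_loss_ptE.
rewrite softmax_lossE.
apply: (integral_neg_expect_contrast_loss_ge
          (u := fun y => dotr (f x) (f y)) rho_ge0) => k.
  exact: integrable_dotr.
exact: integral_dotr.
Qed.

End mean_classifier.

Theorem lemma3p2 (R : realType) (d : measure_display) (X : measurableType d)
  (C : finType) (rho : C -> R) (D : C -> probability X R) (n N : nat)
  (f : X -> 'rV[R]_n) :
  (forall c, 0 < rho c) ->
  \sum_(c : C) rho c = 1 ->
  (#|C| <= N)%N ->
  (forall j : 'I_n, measurable_fun setT (fun x => f x 0 j)) ->
  (forall (c : C) (j : 'I_n), (D c).-integrable setT (fun x => (f x 0 j)%:E)) ->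
  (L_sup rho D f <= L_sup_mu rho D f)%E /\
  (L_sup_mu rho D f <= ((pcc rho N)^-1)%:E * L_un rho D f N)%E.
Proof.
move=> rho_gt0 rho_sum1 CN f_meas f_int.
have rho_ge0 k : 0 <= rho k by exact/ltW.
split; first by apply: ereal_inf_lbound; exists (W_mu D f).
have C_gt0 : (0 < #|C|)%N.
  case: (pickP (@predT C)) => [c _|C0]; first by apply/card_gt0P; exists c.
  by move: rho_sum1; rewrite big_pred0 // => /esym/eqP; rewrite oner_eq0.
have pcc_gt0 : 0 < pcc rho N by rewrite pcc_pcover pcover_setT_gt0 ?C_gt0.
rewrite -[leLHS]mul1e -(mulVf (lt0r_neq0 pcc_gt0)) EFinM -muleA.
apply: lee_wpmul2l; first by rewrite lee_fin invr_ge0 ltW.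
rewrite /L_sup_mu /sup_loss_W /L_un ge0_sume_distrr => [|c _]; last first.
  rewrite mule_ge0 ?lee_fin // integral_ge0 // => x _.
  by rewrite lee_fin softmax_loss_ge0.
apply: lee_sum => c _; rewrite muleCA; apply: lee_wpmul2l; first by rewrite lee_fin.
rewrite -ge0_integralZl_EFin //; last 3 first.
- by move=> x _; rewrite lee_fin softmax_loss_ge0.
- exact/measurable_realfun.measurable_EFinP/measurable_softmax_loss.
- exact: ltW.
apply: ge0_le_integralT => x.
  by rewrite -EFinM lee_fin mulr_ge0 ?softmax_loss_ge0 ?ltW.
apply: le_trans (softmax_loss_W_mu_le f_int N c x rho_ge0).
rewrite -EFinM lee_fin ler_wpM2r ?softmax_loss_ge0 // pcc_pcover.
by apply: le_pcover => //; exact: subsetT.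
Qed.
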